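(* Every closed semi-smooth subset of $\mathbb{C}$ is a $2$-dimensional topological manifold with boundary.
   Context: Let $B\subset\mathbb{C}$ be closed. For $z\in\partial B$, a vector $\mathbf v\in T_z\mathbb{C}\cong\mathbb{C}$ is normal to $B$ if $\mathbf v\neq 0$ and for every $\theta\in(0,\pi/2)$ there is $\delta>0$ such that the open sector $\{z+te^{i\phi}\mathbf v/|\mathbf v| : \phi\in(-\theta,\theta),\ t\in(0,\delta)\}$ is disjoint from $B$. The closed set $B$ is semi-smooth if (i) for every $z\in\partial B$ the set of vectors normal to $B$ at $z$ is non-empty and convex, and (ii) any non-zero limit of normal vectors is normal: if $z_n\in\partial B$, $\mathbf v_n$ is normal to $B$ at $z_n$, $z_n\to z$ and $\mathbf v_n\to\mathbf v\neq 0$, then $\mathbf v$ is normal to $B$ at $z$. *)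

From Stdlib Require Import Reals.
From Coquelicot Require Import Coquelicot.
Open Scope R_scope.

Definition is_open (U : C -> Prop) : Prop :=
  forall z, U z -> exists e, 0 < e /\ forall w, Cmod (w - z)%C < e -> U w.

Definition is_closed (B : C -> Prop) : Prop :=
  forall z, (forall e, 0 < e -> exists w, B w /\ Cmod (w - z)%C < e) -> B z.

Definition interior (B : C -> Prop) (z : C) : Prop :=
  exists e, 0 < e /\ forall w, Cmod (w - z)%C < e -> B w.

Definition closure (B : C -> Prop) (z : C) : Prop :=
  forall e, 0 < e -> exists w, B w /\ Cmod (w - z)%C < e.

Definition boundary (B : C -> Prop) (z : C) : Prop :=
  closure B z /\ ~ interior B z.

Definition seq_conv (u : nat -> C) (l : C) : Prop :=
  forall e, 0 < e -> exists N, forall n, (N <= n)%nat -> Cmod (u n - l)%C < e.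

Definition expi (phi : R) : C := (cos phi, sin phi).

Definition is_normal (B : C -> Prop) (z v : C) : Prop :=
  v <> 0%C /\
  forall theta, 0 < theta < PI / 2 ->
    exists delta, 0 < delta /\
      forall phi t, - theta < phi < theta -> 0 < t < delta ->
        ~ B (z + RtoC t * expi phi * (v / RtoC (Cmod v)))%C.

Definition semi_smooth (B : C -> Prop) : Prop :=
  is_closed B /\
  (forall z, boundary B z ->
     (exists v, is_normal B z v) /\
     (forall v w (l : R), is_normal B z v -> is_normal B z w -> 0 <= l <= 1 ->
        is_normal B z (RtoC l * v + RtoC (1 - l) * w)%C)) /\
  (forall (zs vs : nat -> C) (z v : C),
     (forall n, boundary B (zs n)) ->
     (forall n, is_normal B (zs n) (vs n)) ->
     seq_conv zs z -> seq_conv vs v -> v <> 0%C ->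
     is_normal B z v).

Definition half_plane (p : C) : Prop := 0 <= snd p.

Definition continuous_on (A : C -> Prop) (f : C -> C) : Prop :=
  forall x, A x -> forall e, 0 < e -> exists d, 0 < d /\
    forall y, A y -> Cmod (y - x)%C < d -> Cmod (f y - f x)%C < e.

Definition homeomorphic_via (A V : C -> Prop) (f g : C -> C) : Prop :=
  (forall x, A x -> V (f x)) /\ (forall y, V y -> A (g y)) /\
  (forall x, A x -> g (f x) = x) /\ (forall y, V y -> f (g y) = y) /\
  continuous_on A f /\ continuous_on V g.

(* M (a subspace of C, hence Hausdorff and second countable) is a topological
   2-manifold with boundary: every point of M has an open neighbourhood in M
   homeomorphic to an open subset of the closed half-plane H. *)
Definition manifold_with_boundary_2 (M : C -> Prop) : Prop :=
  forall x, M x ->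
    exists (U W : C -> Prop) (f g : C -> C),
      is_open U /\ U x /\ is_open W /\
      homeomorphic_via (fun y => U y /\ M y) (fun p => W p /\ half_plane p) f g.

From Pilot Require Import Defs.
From Stdlib Require Import Reals Lra Lia Psatz ZArith ClassicalEpsilon Classical.
From Coquelicot Require Import Coquelicot.
Open Scope R_scope.

(* At an interior point a translation is a chart. At a boundary point z0 the normal cone is convex,
   closed under nonzero limits and contains no pair of opposite vectors, so it lies in an open
   half-plane {n | <n, u> > 0}; by semi-smoothness (ii) and compactness this holds uniformly,
   <n, u> >= c |n|, for the normals at all boundary points near z0. Along a segment that starts off B
   and has direction within c / 2 of u, the distance to B cannot decrease, because the vector to the
   current point from its nearest point of B is such a normal. Hence near z0, in coordinates (x, y)
   with y measured along -u, B is the epigraph y >= f x of a (2 / c)-Lipschitz function f, and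
   (x, y) |-> (x, y - f x) is a chart onto an open subset of the half-plane. *)

Lemma C_ext (x y : C) : fst x = fst y -> snd x = snd y -> x = y.
Proof. destruct x, y; simpl; intros; subst; reflexivity. Qed.

Ltac Cring := apply C_ext; simpl; ring.
Ltac Cfield := apply C_ext; simpl; field.

Definition dot (a b : C) : R := fst a * fst b + snd a * snd b.
Definition cross (a b : C) : R := fst a * snd b - snd a * fst b.
Definition perp (e : C) : C := (- snd e, fst e).

Lemma dot_addr n a b : dot n (a + b)%C = dot n a + dot n b.
Proof. unfold dot; simpl; ring. Qed.

Lemma dot_scalel k a n : dot (RtoC k * a)%C n = k * dot a n.
Proof. unfold dot; simpl; ring. Qed.

Lemma dot_scaler k a n : dot n (RtoC k * a)%C = k * dot n a.
Proof. unfold dot; simpl; ring. Qed.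

Lemma dot_perpr a e : dot a (perp e) = cross e a.
Proof. unfold dot, cross, perp; simpl; ring. Qed.

Lemma Cmod_sqr_dot a : Cmod a * Cmod a = dot a a.
Proof.
  unfold Cmod, dot. rewrite sqrt_sqrt; [ring|].
  pose proof (pow2_ge_0 (fst a)); pose proof (pow2_ge_0 (snd a)); lra.
Qed.

Lemma Cmod_lt_sqr x r : 0 <= r -> dot x x < r * r -> Cmod x < r.
Proof. intros. pose proof (Cmod_sqr_dot x). pose proof (Cmod_ge_0 x). nra. Qed.

Lemma Rabs_fst_le_Cmod a : Rabs (fst a) <= Cmod a.
Proof. apply re_le_Cmod. Qed.

Lemma Rabs_snd_le_Cmod a : Rabs (snd a) <= Cmod a.
Proof. pose proof (Rmax_Cmod a). pose proof (Rmax_r (Rabs (fst a)) (Rabs (snd a))). lra. Qed.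

Lemma Cmod_le_Rabs_sum a : Cmod a <= Rabs (fst a) + Rabs (snd a).
Proof.
  pose proof (Rabs_pos (fst a)); pose proof (Rabs_pos (snd a)).
  pose proof (Cmod_ge_0 a). rewrite <- (Rabs_pos_eq (Cmod a)) by lra.
  rewrite <- (Rabs_pos_eq (Rabs (fst a) + Rabs (snd a))) by lra.
  apply Rsqr_le_abs_0. unfold Rsqr. rewrite Cmod_sqr_dot. unfold dot.
  rewrite <- (Rabs_pos_eq (fst a * fst a)), <- (Rabs_pos_eq (snd a * snd a)), !Rabs_mult by nra.
  nra.
Qed.

Lemma Rabs_dot_le a b : Rabs (dot a b) <= Cmod a * Cmod b.
Proof.
  pose proof (Cmod_ge_0 a); pose proof (Cmod_ge_0 b).
  rewrite <- (Rabs_pos_eq (Cmod a * Cmod b)) by nra.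
  apply Rsqr_le_abs_0. unfold Rsqr.
  replace (Cmod a * Cmod b * (Cmod a * Cmod b)) with ((Cmod a * Cmod a) * (Cmod b * Cmod b)) by ring.
  rewrite !Cmod_sqr_dot. unfold dot.
  pose proof (pow2_ge_0 (fst a * snd b - snd a * fst b)). nra.
Qed.

Lemma Cmod_sub_sym a b : Cmod (a - b) = Cmod (b - a).
Proof. rewrite <- Cmod_opp. f_equal. Cring. Qed.

Lemma Cmod_sub_triangle a b c : Cmod (a - c) <= Cmod (a - b) + Cmod (b - c).
Proof. replace (a - c)%C with ((a - b) + (b - c))%C by Cring. apply Cmod_triangle. Qed.

Lemma Cmod_scale k v : 0 <= k -> Cmod (RtoC k * v) = k * Cmod v.
Proof. intros. rewrite Cmod_mult, Cmod_R, Rabs_pos_eq; auto. Qed.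

Lemma Cmod_sub_diag x : Cmod (x - x) = 0.
Proof. replace (x - x)%C with (RtoC 0) by Cring. apply Cmod_0. Qed.

Lemma Cdiv_R v m : m <> 0 -> (v / RtoC m)%C = (fst v / m, snd v / m).
Proof. intros. destruct v; unfold Cdiv; Cfield; auto. Qed.

Section UnitVector.
Variable e : C.
Hypothesis He : Cmod e = 1.

Lemma dot_unit : dot e e = 1.
Proof. rewrite <- Cmod_sqr_dot, He; ring. Qed.

Lemma Cmod_perp : Cmod (perp e) = 1.
Proof. rewrite <- He. unfold Cmod, perp; simpl. f_equal. ring. Qed.

Lemma unit_decomp v : v = (RtoC (dot v e) * e + RtoC (cross e v) * perp e)%C.
Proof.
  pose proof dot_unit as E. unfold dot, cross, perp in *.
  apply C_ext; simpl; [transitivity (fst v * (fst e * fst e + snd e * snd e))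
                     | transitivity (snd v * (fst e * fst e + snd e * snd e))];
  try (rewrite E; ring); ring.
Qed.

Lemma dot_unit_coords n a : dot n a = dot n e * dot a e + cross e n * cross e a.
Proof.
  pose proof dot_unit as E. unfold dot, cross in *.
  transitivity ((fst n * fst a + snd n * snd a) * (fst e * fst e + snd e * snd e)).
  - rewrite E; ring.
  - ring.
Qed.

Lemma unit_coords_sqr n : Cmod n = 1 -> dot n e * dot n e + cross e n * cross e n = 1.
Proof.
  intros Hn. rewrite <- dot_unit_coords. rewrite <- Cmod_sqr_dot, Hn; ring.
Qed.

End UnitVector.

Lemma Cmod1_neq0 l : Cmod l = 1 -> l <> 0%C.
Proof. intros H E. rewrite E, Cmod_0 in H. lra. Qed.

Definition Rseq_conv (a : nat -> R) (l : R) : Prop :=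
  forall e, 0 < e -> exists N, forall n, (N <= n)%nat -> Rabs (a n - l) < e.

Lemma inv_INR_succ_pos k : 0 < / (INR k + 1).
Proof. apply Rinv_0_lt_compat; pose proof (pos_INR k); lra. Qed.

Lemma inv_INR_succ_small e : 0 < e -> exists N, forall n, (N <= n)%nat -> / (INR n + 1) < e.
Proof.
  intros He. destruct (archimed (/ e)) as [Hup _].
  assert (0 <= IZR (up (/ e))) by (pose proof (Rinv_0_lt_compat e He); lra).
  exists (Z.to_nat (up (/ e))). intros n Hn.
  apply le_INR in Hn. rewrite INR_IZR_INZ, Z2Nat.id in Hn by (apply le_IZR; lra).
  rewrite <- (Rinv_inv e). apply Rinv_lt_contravar; [|lra].
  apply Rmult_lt_0_compat; [apply Rinv_0_lt_compat; lra | pose proof (pos_INR n); lra].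
Qed.

Lemma Rseq_conv_le a l k : Rseq_conv a l -> (forall n, a n <= k) -> l <= k.
Proof.
  intros H Hk. apply Rnot_lt_le. intro Hlt.
  destruct (H (l - k)) as [N HN]; [lra|].
  specialize (HN N (le_n _)). specialize (Hk N). apply Rabs_def2 in HN. lra.
Qed.

Lemma Rseq_conv_ge a l k : Rseq_conv a l -> (forall n, k <= a n) -> k <= l.
Proof.
  intros H Hk. apply Rnot_lt_le. intro Hlt.
  destruct (H (k - l)) as [N HN]; [lra|].
  specialize (HN N (le_n _)). specialize (Hk N). apply Rabs_def2 in HN. lra.
Qed.

Lemma Rseq_conv_le_vanishing a l c :
  Rseq_conv a l -> (forall k, a k <= c + / (INR k + 1)) -> l <= c.
Proof.
  intros H Hk. apply Rnot_lt_le. intro Hlt.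
  destruct (H ((l - c) / 2)) as [N1 HN1]; [lra|].
  destruct (inv_INR_succ_small ((l - c) / 2)) as [N2 HN2]; [lra|].
  specialize (HN1 (max N1 N2) ltac:(lia)). specialize (HN2 (max N1 N2) ltac:(lia)).
  specialize (Hk (max N1 N2)). apply Rabs_def2 in HN1. lra.
Qed.

Lemma seq_conv_lipschitz (h : C -> R) L s l : 0 <= L ->
  (forall x y, Rabs (h x - h y) <= L * Cmod (x - y)) ->
  seq_conv s l -> Rseq_conv (fun k => h (s k)) (h l).
Proof.
  intros HL Hh Hs e He. destruct (Hs (e / (L + 1))) as [N HN].
  { apply Rdiv_lt_0_compat; lra. }
  exists N. intros n Hn. specialize (HN n Hn).
  eapply Rle_lt_trans; [apply Hh|].
  pose proof (Cmod_ge_0 (s n - l)).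
  apply Rle_lt_trans with (Cmod (s n - l) * (L + 1)); [nra|].
  apply Rlt_le_trans with (e / (L + 1) * (L + 1)).
  - apply Rmult_lt_compat_r; lra.
  - right; field; lra.
Qed.

Lemma dot_lipschitz w x y : Rabs (dot x w - dot y w) <= Cmod w * Cmod (x - y).
Proof.
  replace (dot x w - dot y w) with (dot (x - y)%C w) by (unfold dot; simpl; ring).
  rewrite Rmult_comm. apply Rabs_dot_le.
Qed.

Lemma Cmod_sub_lipschitz w x y : Rabs (Cmod (x - w) - Cmod (y - w)) <= 1 * Cmod (x - y).
Proof.
  rewrite Rmult_1_l. pose proof (Cmod_sub_triangle x y w). pose proof (Cmod_sub_triangle y x w).
  rewrite (Cmod_sub_sym y x) in H0. apply Rabs_le; lra.
Qed.

Lemma seq_conv_of_coords u l :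
  Rseq_conv (fun n => fst (u n)) (fst l) -> Rseq_conv (fun n => snd (u n)) (snd l) -> seq_conv u l.
Proof.
  intros H1 H2 e He.
  destruct (H1 (e / 2)) as [N1 HN1]; [lra|]. destruct (H2 (e / 2)) as [N2 HN2]; [lra|].
  exists (max N1 N2). intros n Hn.
  specialize (HN1 n ltac:(lia)). specialize (HN2 n ltac:(lia)).
  eapply Rle_lt_trans; [apply Cmod_le_Rabs_sum|]. simpl.
  replace (fst (u n) + - fst l) with (fst (u n) - fst l) by ring.
  replace (snd (u n) + - snd l) with (snd (u n) - snd l) by ring. lra.
Qed.

Lemma seq_conv_const x : seq_conv (fun _ => x) x.
Proof. intros e He. exists 0%nat. intros. rewrite Cmod_sub_diag. auto. Qed.

Lemma seq_conv_rate w z : (forall k, Cmod (w k - z) < / (INR k + 1)) -> seq_conv w z.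
Proof.
  intros H e He. destruct (inv_INR_succ_small e He) as [N HN]. exists N. intros n Hn.
  eapply Rlt_trans; [apply H | apply HN; auto].
Qed.

Lemma seq_conv_Cmod_const s l r : (forall k, Cmod (s k) = r) -> seq_conv s l -> Cmod l = r.
Proof.
  intros Hs Hl.
  assert (Hc : Rseq_conv (fun k => Cmod (s k - 0)) (Cmod (l - 0))).
  { exact (seq_conv_lipschitz _ 1 s l ltac:(lra) (Cmod_sub_lipschitz 0) Hl). }
  replace (l - 0)%C with l in Hc by Cring.
  assert (Hs0 : forall k, Cmod (s k - 0) = r) by (intro k; rewrite <- (Hs k); f_equal; Cring).
  apply Rle_antisym; [apply (Rseq_conv_le _ _ _ Hc) | apply (Rseq_conv_ge _ _ _ Hc)];
    intro k; rewrite Hs0; lra.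
Qed.

Definition strict_incr (phi : nat -> nat) : Prop := forall k, (phi k < phi (S k))%nat.

Lemma strict_incr_ge phi : strict_incr phi -> forall k, (k <= phi k)%nat.
Proof. intros H k; induction k; [lia|]. specialize (H k). lia. Qed.

Lemma strict_incr_lt phi : strict_incr phi -> forall k j, (k < j)%nat -> (phi k < phi j)%nat.
Proof. intros H k j Hkj. induction Hkj; [apply H|]. specialize (H m). lia. Qed.

Lemma strict_incr_comp phi psi : strict_incr phi -> strict_incr psi -> strict_incr (fun k => phi (psi k)).
Proof. intros H1 H2 k. apply strict_incr_lt; auto. Qed.

Lemma inv_INR_succ_subseq phi k : strict_incr phi -> / (INR (phi k) + 1) <= / (INR k + 1).
Proof.
  intro H. pose proof (le_INR _ _ (strict_incr_ge phi H k)).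
  apply Rinv_le_contravar; [pose proof (pos_INR k)|]; lra.
Qed.

Lemma Rseq_conv_subseq a l phi : Rseq_conv a l -> strict_incr phi -> Rseq_conv (fun k => a (phi k)) l.
Proof.
  intros H Hp e He. destruct (H e He) as [N HN]. exists N. intros n Hn. apply HN.
  pose proof (strict_incr_ge phi Hp n). lia.
Qed.

Lemma subseq_of_adherence (a : nat -> R) l :
  (forall e N, 0 < e -> exists p, (N <= p)%nat /\ Rabs (a p - l) < e) ->
  exists phi, strict_incr phi /\ Rseq_conv (fun k => a (phi k)) l.
Proof.
  intros H.
  set (pick := fun N k => proj1_sig (constructive_indefinite_description _
                 (H (/ (INR k + 1)) N (inv_INR_succ_pos k)))).
  assert (Hpick : forall N k, (N <= pick N k)%nat /\ Rabs (a (pick N k) - l) < / (INR k + 1)).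
  { intros N k. unfold pick. destruct (constructive_indefinite_description _ _). auto. }
  set (phi := fix phi k := match k with O => pick O O | S k => pick (S (phi k)) (S k) end).
  exists phi. split.
  - intro k. simpl. destruct (Hpick (S (phi k)) (S k)). lia.
  - intros e He. destruct (inv_INR_succ_small e He) as [N HN]. exists N. intros n Hn.
    eapply Rlt_trans; [|apply (HN n Hn)]. destruct n; simpl; apply Hpick.
Qed.

Lemma bolzano_weierstrass_R (a : nat -> R) M : (forall n, Rabs (a n) <= M) ->
  exists phi l, strict_incr phi /\ Rseq_conv (fun k => a (phi k)) l.
Proof.
  intros HM.
  destruct (Bolzano_Weierstrass a (fun c => -M <= c <= M) (compact_P3 (-M) M)) as [l Hl].
  { intro n. apply Rabs_le_between, HM. }
  destruct (subseq_of_adherence a l) as [phi Hphi].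
  { intros e N He. destruct (Hl (disc l (mkposreal e He)) N) as [p Hp].
    - exists (mkposreal e He). intros y Hy; exact Hy.
    - exists p; exact Hp. }
  exists phi, l; exact Hphi.
Qed.

Lemma bolzano_weierstrass_C (u : nat -> C) M : (forall n, Cmod (u n) <= M) ->
  exists phi l, strict_incr phi /\ seq_conv (fun k => u (phi k)) l.
Proof.
  intros HM.
  destruct (bolzano_weierstrass_R (fun n => fst (u n)) M) as [phi [l1 [Hphi H1]]].
  { intro n. eapply Rle_trans; [apply Rabs_fst_le_Cmod | apply HM]. }
  destruct (bolzano_weierstrass_R (fun k => snd (u (phi k))) M) as [psi [l2 [Hpsi H2]]].
  { intro n. eapply Rle_trans; [apply Rabs_snd_le_Cmod | apply HM]. }
  exists (fun k => phi (psi k)), (l1, l2). split; [apply strict_incr_comp; auto|].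
  apply seq_conv_of_coords; [apply (Rseq_conv_subseq (fun k => fst (u (phi k)))) | ]; auto.
Qed.

Definition seq_closed (P : C -> Prop) : Prop :=
  forall s l, (forall k, P (s k)) -> seq_conv s l -> P l.

Lemma exists_minimizer (P : C -> Prop) (h : C -> R) M L :
  (exists x, P x) -> (forall x, P x -> Cmod x <= M) -> seq_closed P -> 0 <= L ->
  (forall x y, Rabs (h x - h y) <= L * Cmod (x - y)) ->
  exists a, P a /\ forall x, P x -> h a <= h x.
Proof.
  intros [x0 Hx0] HM Hcl HL Hh.
  set (E := fun r => exists x, P x /\ r = - h x).
  assert (Hbd : bound E).
  { exists (- h x0 + L * (M + M)). intros r [x [Hx ->]].
    pose proof (Hh x x0). pose proof (Cmod_sub_triangle x 0 x0).
    replace (x - 0)%C with x in H0 by Cring. replace (0 - x0)%C with (- x0)%C in H0 by Cring.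
    rewrite Cmod_opp in H0. pose proof (HM x Hx). pose proof (HM x0 Hx0).
    pose proof (proj1 (Rabs_le_between _ _) H) as [H3 _].
    assert (L * Cmod (x - x0) <= L * (M + M)) by (apply Rmult_le_compat_l; lra). lra. }
  destruct (completeness E Hbd (ex_intro _ (- h x0) (ex_intro _ x0 (conj Hx0 eq_refl)))) as [m [Hub Hlub]].
  assert (Happrox : forall k : nat, {x | P x /\ h x < - m + / (INR k + 1)}).
  { intro k. apply constructive_indefinite_description. apply NNPP. intro Hno.
    assert (is_upper_bound E (m - / (INR k + 1))).
    { intros r [x [Hx ->]]. apply Rnot_lt_le. intro. apply Hno. exists x. split; auto. lra. }
    specialize (Hlub _ H). pose proof (inv_INR_succ_pos k). lra. }
  set (s := fun k => proj1_sig (Happrox k)).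
  assert (Hs : forall k, P (s k) /\ h (s k) < - m + / (INR k + 1)).
  { intro k. unfold s. destruct (Happrox k). auto. }
  destruct (bolzano_weierstrass_C s M) as [phi [l [Hphi Hl]]].
  { intro k. apply HM, Hs. }
  exists l. split; [apply (Hcl _ l (fun k => proj1 (Hs (phi k))) Hl)|].
  intros x Hx.
  assert (h l <= - m).
  { apply (Rseq_conv_le_vanishing (fun k => h (s (phi k)))).
    - apply (seq_conv_lipschitz h L); auto.
    - intro k. pose proof (proj2 (Hs (phi k))). pose proof (inv_INR_succ_subseq phi k Hphi). lra. }
  assert (E (- h x)) by (exists x; auto). specialize (Hub _ H0). lra.
Qed.

Lemma is_normal_Cmod_pos B z v : is_normal B z v -> 0 < Cmod v.
Proof. intros [Hv _]. apply Cmod_gt_0; auto. Qed.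

Lemma is_normal_scale B z v k : is_normal B z v -> 0 < k -> is_normal B z (RtoC k * v).
Proof.
  intros [Hv H] Hk. split.
  - intro E. apply Hv. apply (f_equal (fun x => (RtoC (/ k) * x)%C)) in E.
    rewrite Cmult_assoc, <- RtoC_mult, Rinv_l, Cmult_1_l, Cmult_0_r in E; auto; lra.
  - assert (Hm : 0 < Cmod v) by (apply Cmod_gt_0; auto).
    replace ((RtoC k * v) / RtoC (Cmod (RtoC k * v)))%C with (v / RtoC (Cmod v))%C; auto.
    rewrite Cmod_scale, !Cdiv_R by nra. Cfield; lra.
Qed.

Lemma is_normal_normalize B z v :
  is_normal B z v -> is_normal B z (RtoC (/ Cmod v) * v) /\ Cmod (RtoC (/ Cmod v) * v) = 1.
Proof.
  intros H. pose proof (is_normal_Cmod_pos _ _ _ H).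
  pose proof (Rinv_0_lt_compat _ H0). split.
  - apply is_normal_scale; auto.
  - rewrite Cmod_scale by lra. field; lra.
Qed.

Lemma cos_ge_cos_bound theta phi : 0 < theta < PI / 2 -> - theta < phi < theta -> cos theta <= cos phi.
Proof.
  intros. pose proof PI_RGT_0.
  destruct (Rle_dec 0 phi).
  - left. apply cos_decreasing_1; lra.
  - rewrite <- (cos_neg phi). left. apply cos_decreasing_1; lra.
Qed.

(* The sector of half-angle theta < pi/2 at q, cut at radius 2 |w - q| cos theta, lies in the ball. *)
Lemma is_normal_proximal (B : C -> Prop) q w : w <> q ->
  (forall y, Cmod (y - w) < Cmod (w - q) -> ~ B y) -> is_normal B q (w - q).
Proof.
  intros Hne Hball.
  assert (Hv : (w - q)%C <> 0%C).
  { intro E. apply Hne. apply (f_equal (fun x => (x + q)%C)) in E.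
    replace (w - q + q)%C with w in E by Cring. rewrite E. Cring. }
  split; auto.
  set (rho := Cmod (w - q)). assert (Hr : 0 < rho) by (apply Cmod_gt_0; auto).
  intros theta Hth. assert (Hc : 0 < cos theta) by (apply cos_gt_0; lra).
  exists (2 * rho * cos theta). split; [nra|].
  intros phi t Hphi Ht. apply Hball. fold rho.
  pose proof (cos_ge_cos_bound theta phi Hth Hphi).
  pose proof (Cmod_sqr_dot (w - q)) as Hrr. fold rho in Hrr.
  rewrite Cdiv_R by lra. unfold expi.
  apply Cmod_lt_sqr; [lra|]. pose proof (sin2_cos2 phi) as Hsc. unfold Rsqr in Hsc.
  destruct w as [w1 w2], q as [q1 q2]. unfold dot in *; simpl in *.
  set (a := w1 + - q1) in *. set (b := w2 + - q2) in *.
  set (cs := cos phi) in *. set (sn := sin phi) in *.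
  match goal with |- ?X < _ => replace X with
    (t * t * (sn * sn + cs * cs) * ((a * a + b * b) / (rho * rho))
     - 2 * t * cs * ((a * a + b * b) / rho) + (a * a + b * b)) by (unfold a, b; field; lra) end.
  rewrite <- Hrr, Hsc.
  replace (rho * rho / (rho * rho)) with 1 by (field; lra).
  replace (rho * rho / rho) with rho by (field; lra).
  assert (t < 2 * rho * cs) by nra. assert (t * t < t * (2 * rho * cs)) by (apply Rmult_lt_compat_l; lra).
  lra.
Qed.

Definition normal_convex (B : C -> Prop) (z : C) : Prop :=
  forall v w (l : R), is_normal B z v -> is_normal B z w -> 0 <= l <= 1 ->
    is_normal B z (RtoC l * v + RtoC (1 - l) * w).

Section NormalCone.
Variables (B : C -> Prop) (z0 : C).
Hypothesis Hconv : normal_convex B z0.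
Hypothesis Hlim : forall s l, (forall k, is_normal B z0 (s k)) -> seq_conv s l -> l <> 0%C ->
  is_normal B z0 l.

Lemma normal_not_opposite v k : is_normal B z0 v -> 0 < k -> ~ is_normal B z0 (RtoC (- k) * v).
Proof.
  intros H1 Hk H2.
  assert (Hl : 0 <= k / (1 + k) <= 1).
  { split; [apply Rlt_le, Rdiv_lt_0_compat; lra|].
    apply Rmult_le_reg_r with (1 + k); [lra|]. field_simplify; lra. }
  destruct (Hconv _ _ _ H1 H2 Hl) as [H0 _]. apply H0. Cfield; lra.
Qed.

Lemma normal_collinear_pos e v : Cmod e = 1 -> is_normal B z0 e -> is_normal B z0 v ->
  cross e v = 0 -> 0 < dot v e.
Proof.
  intros He Hne Hnv Hcr. apply Rnot_le_lt. intro Hd.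
  assert (Ev : v = (RtoC (dot v e) * e)%C).
  { rewrite (unit_decomp e He v) at 1. rewrite Hcr. Cring. }
  destruct (Rle_lt_or_eq_dec _ _ Hd) as [Hlt|Heq].
  - apply (normal_not_opposite e (- dot v e) Hne); [lra|].
    rewrite Ropp_involutive, <- Ev. auto.
  - destruct Hnv as [Hv _]. apply Hv. rewrite Ev, Heq. Cring.
Qed.

Definition side_normal (sg : R) (e n : C) : Prop :=
  is_normal B z0 n /\ Cmod n = 1 /\ 0 <= sg * cross e n.

Lemma side_normal_seq_closed sg e : seq_closed (side_normal sg e).
Proof.
  intros s l Hs Hl.
  assert (Hl1 : Cmod l = 1) by (apply (seq_conv_Cmod_const s l 1); [apply Hs | auto]).
  split; [|split]; auto.
  - apply (Hlim s l); [apply Hs | auto | apply Cmod1_neq0; auto].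
  - rewrite <- dot_perpr, <- dot_scaler.
    apply (Rseq_conv_ge (fun k => dot (s k) (RtoC sg * perp e)%C)).
    + exact (seq_conv_lipschitz _ _ s l (Cmod_ge_0 _) (dot_lipschitz _) Hl).
    + intro k. rewrite dot_scaler, dot_perpr. apply Hs.
Qed.

Lemma extreme_side_normal sg e : is_normal B z0 e -> Cmod e = 1 ->
  exists a, side_normal sg e a /\ forall n, side_normal sg e n -> dot a e <= dot n e.
Proof.
  intros Hne He.
  apply (exists_minimizer _ (fun n => dot n e) 1 (Cmod e)).
  - exists e. split; [auto|split; [auto|]].
    unfold cross. replace (fst e * snd e - snd e * fst e) with 0 by ring. lra.
  - intros n [_ [Hn _]]. lra.
  - apply side_normal_seq_closed.
  - apply Cmod_ge_0.
  - intros x y. apply dot_lipschitz.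
Qed.


(* Coordinates in the frame (e, perp e): a = (m, s) and b = (m', -s') are the extreme unit normals
   on either side of e, n = (x, y) is a unit normal with y >= 0, hence m <= x by extremality. *)
Lemma bisector_dot_pos m s m' s' x y :
  m * m + s * s = 1 -> m' * m' + s' * s' = 1 -> x * x + y * y = 1 ->
  0 <= s -> 0 <= s' -> 0 <= y -> m <= x ->
  (s = 0 -> m = 1) -> (s' = 0 -> m' = 1) -> (0 < s + s' -> 0 < s' * m + s * m') ->
  0 < x * (m + m') + y * (s - s').
Proof.
  intros Hm Hm' Hx Hs Hs' Hy Hxm D1 D2 D3.
  destruct (Req_dec s 0) as [E|Hs0].
  - specialize (D1 E). subst. assert (x = 1) by nra. assert (y = 0) by nra. subst.
    destruct (Req_dec s' 0) as [E'|E'].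
    + rewrite (D2 E'). lra.
    + assert (0 < s') by lra. assert (m' > -1) by nra. nra.
  - assert (Hsp : 0 < s) by lra. specialize (D3 ltac:(lra)).
    assert (Hmm : 0 < m + m').
    { destruct (Rle_dec 0 m); destruct (Rle_dec (m + m') 0); try lra.
      - assert (m' * m' >= m * m) by nra. assert (s' <= s) by nra. nra.
      - assert (m' > 0) by nra. assert (s <= s') by nra. nra. }
    assert (H2 : 0 < 1 + m * m' - s * s').
    { assert ((1 + m * m') * (1 + m * m') - (s * s') * (s * s') = (m + m') * (m + m')) by nra.
      assert (0 <= s * s') by nra. assert (0 <= 1 + m * m') by nra. nra. }
    assert (H3 : 0 <= x * s - y * m).
    { destruct (Rle_dec m 0); destruct (Rle_dec 0 x); try nra.
      - assert (s <= y) by nra. nra.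
      - assert (y <= s) by nra. nra. }
    apply Rmult_lt_reg_l with s; auto.
    replace (s * (x * (m + m') + y * (s - s')))
      with ((x * s - y * m) * (m + m') + y * (1 + m * m' - s * s')) by nra.
    destruct (Req_dec y 0) as [Ey|Ey].
    + subst. assert (x = 1 \/ x = -1) as [Ex|Ex] by nra; subst; nra.
    + nra.
Qed.

Lemma unit_normal_on_axis e n : Cmod e = 1 -> is_normal B z0 e -> is_normal B z0 n -> Cmod n = 1 ->
  cross e n = 0 -> dot n e = 1.
Proof.
  intros He1 He Hn Hn1 Hcr. pose proof (normal_collinear_pos e n He1 He Hn Hcr).
  pose proof (unit_coords_sqr e He1 n Hn1). rewrite Hcr in H0. nra.
Qed.

(* The convex combination of a and b lying on the axis of e is a normal, so it points along +e. *)
Lemma normal_mix_on_axis e a b : Cmod e = 1 -> is_normal B z0 e -> is_normal B z0 a -> is_normal B z0 b ->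
  0 <= cross e a -> cross e b <= 0 -> 0 < cross e a - cross e b ->
  0 < - cross e b * dot a e + cross e a * dot b e.
Proof.
  intros He1 He Ha Hb Hs Hs' Hss.
  set (l := - cross e b / (cross e a - cross e b)).
  assert (Hl : 0 <= l <= 1).
  { unfold l. split; [apply Rmult_le_pos; [lra | left; apply Rinv_0_lt_compat; lra]|].
    apply Rmult_le_reg_r with (cross e a - cross e b); [lra|]. field_simplify; lra. }
  pose proof (is_normal_scale _ _ _ _ (Hconv a b l Ha Hb Hl) Hss) as Hcv.
  replace (- cross e b * dot a e + cross e a * dot b e)
    with (dot (RtoC (cross e a - cross e b) * (RtoC l * a + RtoC (1 - l) * b)) e).
  - apply (normal_collinear_pos e); auto. unfold l, cross; simpl. field. unfold cross in Hss; lra.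
  - unfold l, cross, dot; simpl. field. unfold cross in Hss; lra.
Qed.

Lemma normal_cone_in_open_half_plane : (exists n, is_normal B z0 n) ->
  exists u, Cmod u = 1 /\ forall n, is_normal B z0 n -> 0 < dot n u.
Proof.
  intros [n0 Hn0]. destruct (is_normal_normalize _ _ _ Hn0) as [He He1].
  set (e := (RtoC (/ Cmod n0) * n0)%C) in *. clearbody e.
  destruct (extreme_side_normal 1 e He He1) as [a [[Ha [Ha1 Has]] Hamin]].
  destruct (extreme_side_normal (-1) e He He1) as [b [[Hb [Hb1 Hbs]] Hbmin]].
  set (m := dot a e). set (s := cross e a). set (m' := dot b e). set (s' := - cross e b).
  assert (Hs : 0 <= s) by (unfold s; lra). assert (Hs' : 0 <= s') by (unfold s'; lra).
  assert (Hma : m * m + s * s = 1) by (apply unit_coords_sqr; auto).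
  assert (Hmb : m' * m' + s' * s' = 1).
  { unfold m', s'. rewrite <- (unit_coords_sqr e He1 b Hb1). ring. }
  assert (D1 : s = 0 -> m = 1) by (apply unit_normal_on_axis; auto).
  assert (D2 : s' = 0 -> m' = 1) by (intro; apply unit_normal_on_axis; auto; unfold s' in *; lra).
  assert (D3 : 0 < s + s' -> 0 < s' * m + s * m')
    by (intro; apply normal_mix_on_axis; auto; unfold s, s' in *; lra).
  assert (Hpos : forall n, is_normal B z0 n -> Cmod n = 1 -> 0 < dot n (a + b)).
  { intros n Hn Hn1.
    rewrite dot_addr, (dot_unit_coords e He1 n a), (dot_unit_coords e He1 n b). fold m s m'.
    pose proof (unit_coords_sqr e He1 n Hn1) as Hxy.
    set (x := dot n e) in *. set (y := cross e n) in *.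
    destruct (Rle_dec 0 y).
    - assert (m <= x) by (apply Hamin; split; [|split]; auto; unfold y in *; lra).
      replace (x * m + y * s + (x * m' + y * cross e b)) with (x * (m + m') + y * (s - s'))
        by (unfold s'; ring).
      apply bisector_dot_pos; auto.
    - assert (m' <= x) by (apply Hbmin; split; [|split]; auto; unfold y in *; lra).
      replace (x * m + y * s + (x * m' + y * cross e b)) with (x * (m' + m) + (- y) * (s' - s))
        by (unfold s'; ring).
      apply bisector_dot_pos; auto; [nra | lra |].
      intro. rewrite Rplus_comm. apply D3. lra. }
  assert (Hab : 0 < Cmod (a + b)).
  { apply Cmod_gt_0. intro E. specialize (Hpos e He He1). rewrite E in Hpos. unfold dot in Hpos; simpl in Hpos. lra. }
  exists (RtoC (/ Cmod (a + b)) * (a + b))%C. split.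
  - rewrite Cmod_scale by (left; apply Rinv_0_lt_compat; auto). field; lra.
  - intros n Hn. destruct (is_normal_normalize _ _ _ Hn) as [Hn' Hn1].
    specialize (Hpos _ Hn' Hn1). rewrite dot_scalel in Hpos. rewrite dot_scaler.
    pose proof (is_normal_Cmod_pos _ _ _ Hn).
    pose proof (Rinv_0_lt_compat _ H). pose proof (Rinv_0_lt_compat _ Hab). nra.
Qed.

End NormalCone.

Definition normals_closed_under_limits (B : C -> Prop) : Prop :=
  forall (zs vs : nat -> C) (z v : C),
    (forall n, boundary B (zs n)) -> (forall n, is_normal B (zs n) (vs n)) ->
    seq_conv zs z -> seq_conv vs v -> v <> 0%C -> is_normal B z v.

Lemma normals_uniformly_transverse (B : C -> Prop) z0 u :
  normals_closed_under_limits B -> (forall n, is_normal B z0 n -> 0 < dot n u) ->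
  exists c r, 0 < c <= 1 /\ 0 < r /\
    forall q n, boundary B q -> Cmod (q - z0) < r -> is_normal B q n -> c * Cmod n <= dot n u.
Proof.
  intros Hlim Hu. apply NNPP. intro Hno.
  assert (Hbad : forall k, {p : C * C | boundary B (fst p) /\ Cmod (fst p - z0) < / (INR k + 1) /\
     is_normal B (fst p) (snd p) /\ Cmod (snd p) = 1 /\ dot (snd p) u < / (INR k + 1)}).
  { intro k. apply constructive_indefinite_description. apply NNPP. intro Hk. apply Hno.
    pose proof (inv_INR_succ_pos k).
    exists (/ (INR k + 1)), (/ (INR k + 1)). split; [split; auto|split; auto].
    - rewrite <- Rinv_1. apply Rinv_le_contravar; [lra | pose proof (pos_INR k); lra].
    - intros q n Hq Hqz Hn. apply Rnot_lt_le. intro Hlt. apply Hk.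
      destruct (is_normal_normalize _ _ _ Hn) as [Hn' Hn1].
      exists (q, (RtoC (/ Cmod n) * n)%C). simpl. do 4 (split; [auto|]).
      pose proof (is_normal_Cmod_pos _ _ _ Hn). rewrite dot_scalel.
      apply Rmult_lt_reg_l with (Cmod n); auto. rewrite <- Rmult_assoc, Rinv_r; lra. }
  set (zs := fun k => fst (proj1_sig (Hbad k))).
  set (vs := fun k => snd (proj1_sig (Hbad k))).
  assert (Hzv : forall k, boundary B (zs k) /\ Cmod (zs k - z0) < / (INR k + 1) /\
     is_normal B (zs k) (vs k) /\ Cmod (vs k) = 1 /\ dot (vs k) u < / (INR k + 1)).
  { intro k. unfold zs, vs. destruct (Hbad k). auto. }
  destruct (bolzano_weierstrass_C vs 1) as [phi [l [Hphi Hl]]].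
  { intro k. rewrite (proj1 (proj2 (proj2 (proj2 (Hzv k))))). lra. }
  assert (Hl1 : Cmod l = 1)
    by (apply (seq_conv_Cmod_const (fun k => vs (phi k)) l 1); [intro k; apply Hzv | auto]).
  assert (Hnl : is_normal B z0 l).
  { apply (Hlim (fun k => zs (phi k)) (fun k => vs (phi k))); auto.
    - intro k; apply Hzv.
    - intro k; apply Hzv.
    - apply seq_conv_rate. intro k. eapply Rlt_le_trans; [apply Hzv | apply inv_INR_succ_subseq; auto].
    - apply Cmod1_neq0; auto. }
  assert (dot l u <= 0).
  { apply (Rseq_conv_le_vanishing (fun k => dot (vs (phi k)) u)).
    - exact (seq_conv_lipschitz _ _ (fun k => vs (phi k)) l (Cmod_ge_0 _) (dot_lipschitz u) Hl).
    - intro k. pose proof (proj2 (proj2 (proj2 (proj2 (Hzv (phi k)))))).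
      pose proof (inv_INR_succ_subseq phi k Hphi). lra. }
  specialize (Hu _ Hnl). lra.
Qed.

Lemma closed_seq_closed B : is_closed B -> seq_closed B.
Proof.
  intros Hcl s l Hs Hl. apply Hcl. intros e He. destruct (Hl e He) as [N HN].
  exists (s N). split; [auto | apply HN; lia].
Qed.

Lemma nearest_point_exists (B : C -> Prop) p : is_closed B -> (exists b, B b) ->
  exists q, B q /\ forall b, B b -> Cmod (p - q) <= Cmod (p - b).
Proof.
  intros Hcl [b0 Hb0].
  set (rho := Cmod (b0 - p)).
  destruct (exists_minimizer (fun x => B x /\ Cmod (x - p) <= rho) (fun x => Cmod (x - p))
              (Cmod p + rho) 1) as [q [[Hq Hqr] Hmin]].
  - exists b0. split; auto. unfold rho; lra.
  - intros x [_ Hx]. replace x with ((x - p) + p)%C by Cring.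
    pose proof (Cmod_triangle (x - p) p). lra.
  - intros s l Hs Hl. split.
    + apply (closed_seq_closed B Hcl s l); auto. intro k; apply Hs.
    + apply (Rseq_conv_le (fun k => Cmod (s k - p))).
      * exact (seq_conv_lipschitz _ 1 s l ltac:(lra) (Cmod_sub_lipschitz p) Hl).
      * intro k; apply Hs.
  - lra.
  - apply Cmod_sub_lipschitz.
  - exists q. split; auto. intros b Hb. rewrite !(Cmod_sub_sym p).
    destruct (Rle_dec (Cmod (b - p)) rho); [apply Hmin; auto | lra].
Qed.

Definition nearest_selector (B : C -> Prop) (q : C -> C) : Prop :=
  forall p, B (q p) /\ forall b, B b -> Cmod (p - q p) <= Cmod (p - b).

Lemma nearest_selector_exists (B : C -> Prop) : is_closed B -> (exists b, B b) ->
  exists q, nearest_selector B q.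
Proof.
  intros Hcl Hne.
  exists (fun p => proj1_sig (constructive_indefinite_description _ (nearest_point_exists B p Hcl Hne))).
  intro p. destruct (constructive_indefinite_description _ _). auto.
Qed.

Lemma nearest_point_boundary_normal (B : C -> Prop) y p :
  B y -> (forall b, B b -> Cmod (p - y) <= Cmod (p - b)) -> p <> y ->
  boundary B y /\ is_normal B y (p - y).
Proof.
  intros By Hmin Hne.
  set (v := (p - y)%C).
  assert (Hv : 0 < Cmod v).
  { apply Cmod_gt_0. intro E. apply Hne. replace p with (v + y)%C by (unfold v; Cring). rewrite E. Cring. }
  split.
  - split.
    + intros e He. exists y. rewrite Cmod_sub_diag. auto.
    + intros [e [He Hint]].
      set (lam := Rmin (1 / 2) (e / (2 * Cmod v))).
      assert (Hl1 : 0 < lam) by (unfold lam; apply Rmin_case; [lra | apply Rdiv_lt_0_compat; lra]).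
      assert (Hl2 : lam <= 1 / 2) by apply Rmin_l.
      assert (Hl3 : lam * Cmod v <= e / 2).
      { apply Rle_trans with (e / (2 * Cmod v) * Cmod v).
        - apply Rmult_le_compat_r; [lra | apply Rmin_r].
        - right; field; lra. }
      assert (Bw : B (y + RtoC lam * v)%C).
      { apply Hint. replace ((y + RtoC lam * v) - y)%C with (RtoC lam * v)%C by Cring.
        rewrite Cmod_scale; lra. }
      pose proof (Hmin _ Bw) as Hcl.
      replace (p - (y + RtoC lam * v))%C with (RtoC (1 - lam) * v)%C in Hcl by (unfold v; Cring).
      rewrite Cmod_scale in Hcl by lra. fold v in Hcl. nra.
  - apply is_normal_proximal; auto.
    intros b Hb Bb. pose proof (Hmin b Bb). rewrite Cmod_sub_sym in Hb. lra.
Qed.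

Lemma real_interval_induction (P : R -> Prop) a b : a <= b ->
  (forall x, a <= x <= b -> (forall y, a <= y < x -> P y) ->
     exists e, 0 < e /\ forall y, a <= y < x + e -> y <= b -> P y) ->
  forall x, a <= x <= b -> P x.
Proof.
  intros Hab Hstep.
  set (E := fun x => a <= x <= b /\ forall y, a <= y <= x -> P y).
  assert (Ha : E a).
  { destruct (Hstep a ltac:(lra)) as [e [He H]]; [intros; lra|].
    split; [lra|]. intros y Hy. apply H; lra. }
  assert (Hb : bound E) by (exists b; intros x [Hx _]; lra).
  destruct (completeness E Hb (ex_intro _ a Ha)) as [s [Hs1 Hs2]].
  assert (Has : a <= s) by (apply Hs1; auto).
  assert (Hsb : s <= b) by (apply Hs2; intros x [Hx _]; lra).
  assert (Hbelow : forall y, a <= y < s -> P y).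
  { intros y Hy. apply NNPP. intro Hn.
    assert (is_upper_bound E y).
    { intros x [Hx HP]. apply Rnot_lt_le. intro. apply Hn, HP. lra. }
    specialize (Hs2 _ H). lra. }
  destruct (Hstep s ltac:(lra) Hbelow) as [e [He H]].
  destruct (Rle_dec b s) as [Hbs|Hbs].
  - intros x Hx. apply H; lra.
  - exfalso. pose proof (Rmin_l (s + e / 2) b). pose proof (Rmin_r (s + e / 2) b).
    assert (s < Rmin (s + e / 2) b) by (apply Rmin_case; lra).
    assert (Ex : E (Rmin (s + e / 2) b)).
    { split; [lra|]. intros y Hy. apply H; lra. }
    specialize (Hs1 _ Ex). lra.
Qed.

Section SegmentAvoidsSet.
Variables (B : C -> Prop) (q : C -> C) (z0 u : C) (c r : R).
Hypotheses (Hq : nearest_selector B q) (Hz0 : B z0) (Hc : 0 < c).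
Hypothesis Htransverse : forall y n, boundary B y -> Cmod (y - z0) < r -> is_normal B y n ->
  c * Cmod n <= dot n u.
Variables (w d : C) (S : R).
Hypotheses (Hw : ~ B w) (Hd : Cmod (d - u) <= c / 2)
  (Hnear : forall s, 0 <= s <= S -> Cmod (w + RtoC s * d - z0) < r / 2).

Let p s := (w + RtoC s * d)%C.
Let g s := Cmod (p s - q (p s)).

Lemma seg_dist_nonneg s : 0 <= g s.
Proof. apply Cmod_ge_0. Qed.

Lemma seg_dist_lipschitz s t : g s <= g t + Rabs (s - t) * Cmod d.
Proof.
  apply Rle_trans with (Cmod (p s - q (p t))); [apply Hq, Hq|].
  rewrite <- Cmod_R, <- Cmod_mult.
  replace (RtoC (s - t) * d)%C with (p s - p t)%C by (unfold p; Cring).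
  pose proof (Cmod_sub_triangle (p s) (p t) (q (p t))). unfold g. lra.
Qed.

Lemma seg_dist_start_pos : 0 < g 0.
Proof.
  destruct (seg_dist_nonneg 0) as [|E]; auto. exfalso. apply Hw.
  apply eq_sym, Cmod_eq_0 in E.
  replace w with (p 0 - q (p 0) + q (p 0))%C by (unfold p; Cring). rewrite E.
  replace (0 + q (p 0))%C with (q (p 0)) by Cring. apply Hq.
Qed.

(* Key estimate: the vector from the nearest point is a normal there, hence almost parallel to u
   and so to d. *)
Lemma seg_dist_normal_dot t : 0 <= t <= S -> 0 < g t -> (c / 2) * g t <= dot (p t - q (p t)) d.
Proof.
  intros Ht Hg. destruct (Hq (p t)) as [By Hmin].
  assert (Hne : p t <> q (p t)).
  { intro E. unfold g in Hg.
    replace (p t - q (p t))%C with (RtoC 0) in Hg by (rewrite <- E; Cring). rewrite Cmod_0 in Hg. lra. }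
  destruct (nearest_point_boundary_normal B _ _ By Hmin Hne) as [Hby Hnv].
  assert (Hyz : Cmod (q (p t) - z0) < r).
  { pose proof (Hmin z0 Hz0). pose proof (Hnear t Ht).
    pose proof (Cmod_sub_triangle (q (p t)) (p t) z0). rewrite (Cmod_sub_sym (q (p t)) (p t)) in H1.
    unfold p in *. lra. }
  pose proof (Htransverse _ _ Hby Hyz Hnv).
  replace d with (u + (d - u))%C by Cring. rewrite dot_addr.
  pose proof (Rabs_dot_le (p t - q (p t)) (d - u)). apply Rabs_le_between in H0.
  unfold g in *. pose proof (Cmod_ge_0 (p t - q (p t))). nra.
Qed.

Lemma seg_dist_sqr_bound s t : 0 <= s <= t -> t <= S -> 0 < g t ->
  g s * g s <= g t * g t - (t - s) * c * g t + (t - s) * (t - s) * dot d d.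
Proof.
  intros Hst HtS Hg. pose proof (seg_dist_normal_dot t ltac:(lra) Hg) as Hdot.
  destruct (Hq (p t)) as [By _]. pose proof (proj2 (Hq (p s)) _ By) as Hs.
  replace (p s - q (p t))%C with ((p t - q (p t)) - RtoC (t - s) * d)%C in Hs by (unfold p; Cring).
  change (Cmod (p s - q (p s))) with (g s) in Hs.
  change (g t) with (Cmod (p t - q (p t))) in *.
  set (v := (p t - q (p t))%C) in *.
  assert (Cmod (v - RtoC (t - s) * d) * Cmod (v - RtoC (t - s) * d)
          = dot v v - 2 * (t - s) * dot v d + (t - s) * (t - s) * dot d d).
  { rewrite Cmod_sqr_dot. unfold dot; simpl; ring. }
  pose proof (Cmod_sqr_dot v). pose proof (seg_dist_nonneg s). nra.
Qed.

Lemma seg_dist_left_limit x : 0 < x -> (forall y, 0 <= y < x -> g 0 <= g y) -> g 0 <= g x.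
Proof.
  intros Hx Hbel. apply Rnot_lt_le. intro Hlt.
  set (eps := g 0 - g x). pose proof (Cmod_ge_0 d).
  set (y := Rmax 0 (x - eps / (2 * (Cmod d + 1)))).
  pose proof (Rmax_l 0 (x - eps / (2 * (Cmod d + 1)))).
  pose proof (Rmax_r 0 (x - eps / (2 * (Cmod d + 1)))). fold y in H0, H1.
  assert (Hy : y < x).
  { unfold y. apply Rmax_lub_lt; [lra|]. assert (0 < eps / (2 * (Cmod d + 1))); [|lra].
    apply Rdiv_lt_0_compat; unfold eps; lra. }
  pose proof (Hbel y ltac:(lra)). pose proof (seg_dist_lipschitz y x).
  rewrite Rabs_minus_sym, Rabs_pos_eq in H3 by lra.
  assert ((x - y) * Cmod d < eps).
  { apply Rle_lt_trans with (eps / (2 * (Cmod d + 1)) * (Cmod d + 1)).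
    - apply Rmult_le_compat; lra.
    - replace (eps / (2 * (Cmod d + 1)) * (Cmod d + 1)) with (eps / 2) by (field; lra). unfold eps; lra. }
  unfold eps in *. lra.
Qed.

Lemma seg_dist_right_step x : 0 <= x <= S -> g 0 <= g x ->
  exists e, 0 < e /\ forall y, x < y < x + e -> y <= S -> g 0 <= g y.
Proof.
  intros Hx Px. pose proof seg_dist_start_pos as Hg0.
  pose proof (Cmod_ge_0 d). assert (Hdd : 0 <= dot d d) by (rewrite <- Cmod_sqr_dot; nra).
  set (k := Rmin (c / (2 * (dot d d + 1))) (1 / (2 * (Cmod d + 1)))).
  assert (Hk1 : k <= c / (2 * (dot d d + 1))) by apply Rmin_l.
  assert (Hk2 : k <= 1 / (2 * (Cmod d + 1))) by apply Rmin_r.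
  assert (Hk : 0 < k) by (apply Rmin_case; apply Rdiv_lt_0_compat; lra).
  exists (g 0 * k). split; [nra|].
  intros y Hy HyS. set (h := y - x).
  assert (Heb : g 0 * k * Cmod d <= g 0 / 2).
  { apply Rle_trans with (g 0 * k * (Cmod d + 1)); [nra|].
    apply Rle_trans with (g 0 * (1 / (2 * (Cmod d + 1))) * (Cmod d + 1)).
    - apply Rmult_le_compat_r; [lra|]. apply Rmult_le_compat_l; lra.
    - right; field; lra. }
  assert (Hen : g 0 * k * dot d d <= c * (g 0 / 2)).
  { apply Rle_trans with (g 0 * k * (dot d d + 1)); [nra|].
    apply Rle_trans with (g 0 * (c / (2 * (dot d d + 1))) * (dot d d + 1)).
    - apply Rmult_le_compat_r; [lra|]. apply Rmult_le_compat_l; lra.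
    - right; field; lra. }
  assert (Hgy : g 0 / 2 <= g y).
  { pose proof (seg_dist_lipschitz x y). rewrite Rabs_minus_sym, Rabs_pos_eq in H0 by lra.
    fold h in H0. assert (h * Cmod d <= g 0 * k * Cmod d) by (apply Rmult_le_compat_r; unfold h; lra).
    lra. }
  pose proof (seg_dist_sqr_bound x y ltac:(lra) HyS ltac:(lra)). fold h in H0.
  assert (h * dot d d <= c * g y) by (unfold h in *; nra).
  assert (g x * g x <= g y * g y) by (unfold h in *; nra).
  pose proof (seg_dist_nonneg x). pose proof (seg_dist_nonneg y). nra.
Qed.

Lemma seg_dist_nondecreasing x : 0 <= S -> 0 <= x <= S -> g 0 <= g x.
Proof.
  intros HS. revert x. apply (real_interval_induction (fun x => g 0 <= g x)); auto.
  intros x0 Hx0 Hbel.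
  assert (Px0 : g 0 <= g x0).
  { destruct (Req_dec x0 0) as [->|Hne]; [lra|]. apply seg_dist_left_limit; [lra|]. auto. }
  destruct (seg_dist_right_step x0 Hx0 Px0) as [e [He Hstep]].
  exists e. split; auto. intros y Hy HyS.
  destruct (Rlt_le_dec y x0); [apply Hbel; lra|].
  destruct (Req_dec y x0) as [->|]; [auto | apply Hstep; lra].
Qed.

Lemma segment_avoids_set : 0 <= S -> ~ B (w + RtoC S * d).
Proof.
  intros HS HB. pose proof (seg_dist_nondecreasing S HS ltac:(lra)).
  pose proof (proj2 (Hq (p S)) _ HB). unfold p in H0.
  rewrite Cmod_sub_diag in H0. pose proof seg_dist_start_pos. unfold g, p in *. lra.
Qed.

End SegmentAvoidsSet.

Lemma Rabs_lt_between x a : Rabs x < a <-> - a < x < a.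
Proof. unfold Rabs; destruct (Rcase_abs x); split; intros; lra. Qed.

Section Frame.
Variables (z0 u : C).
Hypothesis Hu : Cmod u = 1.

Definition frame_pt (x y : R) : C := (z0 + RtoC x * perp u - RtoC y * u)%C.
Definition frame_x (p : C) : R := dot (p - z0) (perp u).
Definition frame_y (p : C) : R := - dot (p - z0) u.

Lemma frame_x_pt x y : frame_x (frame_pt x y) = x.
Proof.
  pose proof (dot_unit u Hu). unfold frame_x, frame_pt, dot, perp in *; simpl.
  transitivity (x * (fst u * fst u + snd u * snd u)); [ring | rewrite H; ring].
Qed.

Lemma frame_y_pt x y : frame_y (frame_pt x y) = y.
Proof.
  pose proof (dot_unit u Hu). unfold frame_y, frame_pt, dot, perp in *; simpl.
  transitivity (y * (fst u * fst u + snd u * snd u)); [ring | rewrite H; ring].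
Qed.

Lemma frame_pt_xy p : frame_pt (frame_x p) (frame_y p) = p.
Proof.
  unfold frame_pt, frame_x, frame_y. rewrite dot_perpr.
  transitivity (z0 + (RtoC (dot (p - z0) u) * u + RtoC (cross u (p - z0)) * perp u))%C; [Cring|].
  rewrite <- unit_decomp by auto. Cring.
Qed.

Lemma frame_pt_origin : frame_pt 0 0 = z0.
Proof. unfold frame_pt; Cring. Qed.

Lemma frame_pt_dist x y x' y' :
  Cmod (frame_pt x y - frame_pt x' y') <= Rabs (x - x') + Rabs (y - y').
Proof.
  replace (frame_pt x y - frame_pt x' y')%C with (RtoC (x - x') * perp u + - (RtoC (y - y') * u))%C
    by (unfold frame_pt; Cring).
  eapply Rle_trans; [apply Cmod_triangle|].
  rewrite Cmod_opp, !Cmod_mult, !Cmod_R, Cmod_perp, Hu by auto. lra.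
Qed.

Lemma frame_pt_dist_origin x y : Cmod (frame_pt x y - z0) <= Rabs x + Rabs y.
Proof.
  pose proof (frame_pt_dist x y 0 0). rewrite frame_pt_origin, !Rminus_0_r in H. exact H.
Qed.

Lemma frame_x_lipschitz p p' : Rabs (frame_x p - frame_x p') <= Cmod (p - p').
Proof.
  unfold frame_x. replace (dot (p - z0) (perp u) - dot (p' - z0) (perp u)) with (dot (p - p') (perp u))
    by (unfold dot; simpl; ring).
  eapply Rle_trans; [apply Rabs_dot_le|]. rewrite Cmod_perp; auto; lra.
Qed.

Lemma frame_y_lipschitz p p' : Rabs (frame_y p - frame_y p') <= Cmod (p - p').
Proof.
  unfold frame_y. replace (- dot (p - z0) u - - dot (p' - z0) u) with (- dot (p - p') u)
    by (unfold dot; simpl; ring).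
  rewrite Rabs_Ropp. eapply Rle_trans; [apply Rabs_dot_le|]. rewrite Hu; lra.
Qed.

End Frame.

Lemma lipschitz_continuous_on (A : C -> Prop) (f : C -> C) L : 0 <= L ->
  (forall x y, A x -> A y -> Cmod (f y - f x) <= L * Cmod (y - x)) -> Defs.continuous_on A f.
Proof.
  intros HL Hf x Ax e He. exists (e / (L + 1)). split; [apply Rdiv_lt_0_compat; lra|].
  intros y Ay Hy. eapply Rle_lt_trans; [apply Hf; auto|].
  pose proof (Cmod_ge_0 (y - x)).
  apply Rle_lt_trans with (Cmod (y - x) * (L + 1)); [nra|].
  apply Rlt_le_trans with (e / (L + 1) * (L + 1)); [apply Rmult_lt_compat_r; lra | right; field; lra].
Qed.

Definition has_chart_at (M : C -> Prop) (x : C) : Prop :=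
  exists (U W : C -> Prop) (f g : C -> C),
    is_open U /\ U x /\ is_open W /\
    homeomorphic_via (fun y => U y /\ M y) (fun p => W p /\ half_plane p) f g.

Section BoundaryGraph.
Variables (B : C -> Prop) (q : C -> C) (z0 u : C) (c r : R).
Hypotheses (HBc : is_closed B) (Hu : Cmod u = 1) (Hc : 0 < c <= 1) (Hr : 0 < r)
  (Hq : nearest_selector B q) (Hz0 : B z0).
Hypothesis Htransverse : forall y n, boundary B y -> Cmod (y - z0) < r -> is_normal B y n ->
  c * Cmod n <= dot n u.

Let b := r / 8.
Let a := c * b / 4.
Let P := frame_pt z0 u.

Lemma box_height_pos : 0 < b.
Proof. unfold b; lra. Qed.

Lemma box_width_pos : 0 < a.
Proof. pose proof box_height_pos. unfold a; nra. Qed.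

Lemma box_width_le : a <= b / 4.
Proof. pose proof box_height_pos. unfold a; nra. Qed.

(* The segment from P x1 y1 to P x2 y2 has direction within c / 2 of u. *)
Lemma box_cone_avoids x1 y1 x2 y2 : Rabs x1 <= a -> Rabs y1 <= b -> Rabs x2 <= a -> Rabs y2 <= b ->
  y2 < y1 -> Rabs (x2 - x1) <= c / 2 * (y1 - y2) -> ~ B (P x1 y1) -> ~ B (P x2 y2).
Proof.
  intros H1 H2 H3 H4 Hy Hx Hn.
  set (S := y1 - y2).
  set (d := (RtoC (/ S) * (P x2 y2 - P x1 y1))%C).
  replace (P x2 y2) with (P x1 y1 + RtoC S * d)%C by (unfold d, P, frame_pt, S; Cfield; lra).
  apply (segment_avoids_set B q z0 u c r Hq Hz0 (proj1 Hc) Htransverse); auto; [| | unfold S; lra].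
  - replace (d - u)%C with (RtoC ((x2 - x1) / S) * perp u)%C by (unfold d, P, frame_pt, S, perp; Cfield; lra).
    rewrite Cmod_mult, Cmod_R, (Cmod_perp u Hu), Rmult_1_r.
    unfold Rdiv. rewrite Rabs_mult, (Rabs_pos_eq (/ S)) by (left; apply Rinv_0_lt_compat; unfold S; lra).
    apply Rmult_le_reg_r with S; [unfold S; lra|].
    replace (Rabs (x2 - x1) * / S * S) with (Rabs (x2 - x1)) by (field; unfold S; lra).
    unfold S. lra.
  - intros s Hs. set (lam := s / S).
    assert (Hl : 0 <= lam <= 1).
    { unfold lam, S. split; [apply Rmult_le_pos; [lra | left; apply Rinv_0_lt_compat; lra]|].
      apply Rmult_le_reg_r with (y1 - y2); [lra|]. unfold S in Hs. field_simplify; lra. }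
    replace (P x1 y1 + RtoC s * d)%C with (P (x1 + lam * (x2 - x1)) (y1 + lam * (y2 - y1)))
      by (unfold P, frame_pt, d, lam, S; Cfield; lra).
    eapply Rle_lt_trans; [apply (frame_pt_dist_origin z0 u Hu)|].
    apply Rabs_le_between in H1, H2, H3, H4.
    assert (Rabs (x1 + lam * (x2 - x1)) <= a) by (apply Rabs_le_between; nra).
    assert (Rabs (y1 + lam * (y2 - y1)) <= b) by (apply Rabs_le_between; nra).
    pose proof box_width_le. unfold b in *. lra.
Qed.

Lemma column_up_closed x y1 y2 : Rabs x <= a -> - b <= y1 <= y2 -> y2 <= b ->
  B (P x y1) -> B (P x y2).
Proof.
  intros Hx Hy1 Hy2 HB. destruct (Req_dec y1 y2) as [<-|E]; auto.
  apply NNPP. intro H. apply (box_cone_avoids x y2 x y1) in H; auto;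
    [apply Rabs_le_between; lra | apply Rabs_le_between; lra | lra |].
  rewrite Rminus_diag, Rabs_R0. nra.
Qed.

Lemma column_top x : Rabs x <= a -> B (P x (b / 2)).
Proof.
  intros Hx. pose proof box_height_pos. pose proof box_width_pos.
  apply NNPP. intro Hnb. apply (box_cone_avoids x (b / 2) 0 0) in Hnb;
    [apply Hnb; unfold P; rewrite frame_pt_origin; auto | auto | apply Rabs_le_between; lra
    | rewrite Rabs_R0; lra | rewrite Rabs_R0; lra | lra |].
  rewrite Rminus_0_l, Rabs_Ropp. unfold a in Hx. lra.
Qed.

Definition is_graph_height (x m : R) : Prop :=
  (forall y, - b <= y <= b -> B (P x y) -> m <= y) /\
  (forall m', (forall y, - b <= y <= b -> B (P x y) -> m' <= y) -> m' <= m).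

(* The implication makes the statement inhabited also outside the box, where the height is junk. *)
Lemma graph_height_exists x : exists m, Rabs x <= a -> is_graph_height x m.
Proof.
  destruct (classic (Rabs x <= a)) as [Hx|Hx]; [|exists 0; intro; contradiction].
  pose proof box_height_pos.
  set (E := fun z => exists y, - b <= y <= b /\ B (P x y) /\ z = - y).
  assert (Hb : bound E) by (exists b; intros z [y [Hy [_ ->]]]; lra).
  assert (HE : exists z, E z).
  { exists (- (b / 2)), (b / 2). split; [lra|]. split; auto. apply column_top; auto. }
  destruct (completeness E Hb HE) as [M [HM1 HM2]].
  exists (- M). intros _. split.
  - intros y Hy HB. assert (E (- y)) by (exists y; auto). specialize (HM1 _ H0). lra.
  - intros m' Hm'. assert (is_upper_bound E (- m')).
    { intros z [y [Hy [HB ->]]]. specialize (Hm' y Hy HB). lra. }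
    specialize (HM2 _ H0). lra.
Qed.

Definition graph_height (x : R) : R :=
  proj1_sig (constructive_indefinite_description _ (graph_height_exists x)).

Lemma graph_height_spec x : Rabs x <= a -> is_graph_height x (graph_height x).
Proof. unfold graph_height. destruct (constructive_indefinite_description _ _). auto. Qed.

Lemma graph_height_bounds x : Rabs x <= a -> - b <= graph_height x <= b / 2.
Proof.
  intros Hx. pose proof box_height_pos. destruct (graph_height_spec x Hx) as [H1 H2]. split.
  - apply H2. intros y Hy _. lra.
  - apply H1; [lra | apply column_top; auto].
Qed.

Lemma graph_height_attained x : Rabs x <= a -> B (P x (graph_height x)).
Proof.
  intros Hx. pose proof box_height_pos.
  destruct (graph_height_spec x Hx) as [H1 H2]. pose proof (graph_height_bounds x Hx).
  apply HBc. intros e He.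
  destruct (classic (exists y, - b <= y <= b /\ B (P x y) /\ y < graph_height x + e))
    as [[y [Hy [HB Hlt]]]|Hno].
  - exists (P x y). split; auto. eapply Rle_lt_trans; [apply frame_pt_dist; auto|].
    rewrite Rminus_diag, Rabs_R0, Rplus_0_l. assert (graph_height x <= y) by (apply H1; auto).
    rewrite Rabs_pos_eq; lra.
  - exfalso. assert (graph_height x + e <= graph_height x); [|lra].
    apply H2. intros y Hy HB. apply Rnot_lt_le. intro. apply Hno. exists y; auto.
Qed.

Lemma graph_height_char x y : Rabs x <= a -> - b <= y <= b ->
  (B (P x y) <-> graph_height x <= y).
Proof.
  intros Hx Hy. split.
  - intro HB. apply (graph_height_spec x Hx); auto.
  - intro Hle. apply (column_up_closed x (graph_height x) y); auto;
      [pose proof (graph_height_bounds x Hx); lra | lra | apply graph_height_attained; auto].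
Qed.

Lemma graph_height_le x x' : Rabs x <= a -> Rabs x' <= a ->
  graph_height x <= graph_height x' + 2 / c * Rabs (x - x').
Proof.
  intros Hx Hx'. pose proof box_height_pos.
  pose proof (graph_height_bounds x Hx). pose proof (graph_height_bounds x' Hx').
  set (y := graph_height x' + 2 / c * Rabs (x - x')).
  assert (HK : 0 <= 2 / c * Rabs (x - x')).
  { apply Rmult_le_pos; [apply Rlt_le, Rdiv_lt_0_compat | apply Rabs_pos]; lra. }
  destruct (Rle_dec (b / 2) y); [lra|].
  destruct (Req_dec x x') as [<-|E]; [unfold y; lra|].
  assert (Hpos : 0 < 2 / c * Rabs (x - x')).
  { apply Rmult_lt_0_compat; [apply Rdiv_lt_0_compat; lra | apply Rabs_pos_lt; lra]. }
  apply (graph_height_char x y Hx); [unfold y in *; lra|].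
  apply NNPP. intro H2. apply (box_cone_avoids x y x' (graph_height x')) in H2; auto.
  - apply H2, graph_height_attained; auto.
  - apply Rabs_le_between; unfold y in *; lra.
  - apply Rabs_le_between; lra.
  - unfold y; lra.
  - unfold y. rewrite Rabs_minus_sym. right. field. lra.
Qed.

Lemma graph_height_lipschitz x x' : Rabs x <= a -> Rabs x' <= a ->
  Rabs (graph_height x - graph_height x') <= 2 / c * Rabs (x - x').
Proof.
  intros Hx Hx'. pose proof (graph_height_le x x' Hx Hx'). pose proof (graph_height_le x' x Hx' Hx).
  rewrite Rabs_minus_sym in H0. apply Rabs_le_between. lra.
Qed.

Let K := 2 / c.
Let U (p : C) : Prop := Rabs (frame_x z0 u p) < a /\ Rabs (frame_y z0 u p) < b.
Let W (v : C) : Prop := Rabs (fst v) < a /\ - b < snd v + graph_height (fst v) < b.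
Let F (p : C) : C := (frame_x z0 u p, frame_y z0 u p - graph_height (frame_x z0 u p)).
Let G (v : C) : C := P (fst v) (snd v + graph_height (fst v)).

Lemma graph_slope_pos : 0 < K.
Proof. unfold K; apply Rdiv_lt_0_compat; lra. Qed.

Lemma chart_dom_open : is_open U.
Proof.
  intros p [H1 H2]. set (rho := Rmin (a - Rabs (frame_x z0 u p)) (b - Rabs (frame_y z0 u p))).
  pose proof (Rmin_l (a - Rabs (frame_x z0 u p)) (b - Rabs (frame_y z0 u p))).
  pose proof (Rmin_r (a - Rabs (frame_x z0 u p)) (b - Rabs (frame_y z0 u p))).
  exists rho. split; [unfold rho; apply Rmin_case; lra|]. intros w Hw. fold rho in H, H0.
  pose proof (frame_x_lipschitz z0 u Hu w p). pose proof (frame_y_lipschitz z0 u Hu w p).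
  pose proof (Rabs_triang_inv (frame_x z0 u w) (frame_x z0 u p)).
  pose proof (Rabs_triang_inv (frame_y z0 u w) (frame_y z0 u p)).
  split; lra.
Qed.

Lemma chart_dom_center : U z0.
Proof.
  pose proof box_height_pos. pose proof box_width_pos.
  unfold U, frame_x, frame_y. replace (z0 - z0)%C with (RtoC 0) by Cring.
  unfold dot; simpl. rewrite !Rmult_0_l, !Rplus_0_l, Ropp_0, Rabs_R0. lra.
Qed.

Lemma chart_range_open : is_open W.
Proof.
  pose proof graph_slope_pos.
  intros v [H1 H2]. set (x := fst v) in *.
  set (m := Rmin (b - (snd v + graph_height x)) (snd v + graph_height x + b)).
  pose proof (Rmin_l (b - (snd v + graph_height x)) (snd v + graph_height x + b)).
  pose proof (Rmin_r (b - (snd v + graph_height x)) (snd v + graph_height x + b)). fold m in H0, H3.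
  assert (Hm : 0 < m) by (unfold m; apply Rmin_case; lra).
  exists (Rmin (a - Rabs x) (m / (2 + K))).
  split; [apply Rmin_case; [lra | apply Rdiv_lt_0_compat; lra]|].
  intros w Hw. pose proof (Rmin_l (a - Rabs x) (m / (2 + K))). pose proof (Rmin_r (a - Rabs x) (m / (2 + K))).
  pose proof (Rabs_fst_le_Cmod (w - v)%C) as A1. pose proof (Rabs_snd_le_Cmod (w - v)%C) as A2. simpl in A1, A2.
  pose proof (Rabs_triang_inv (fst w) x). unfold Rminus in H6.
  assert (Hx' : Rabs (fst w) < a) by (fold x in A1; lra).
  split; auto.
  pose proof (graph_height_lipschitz (fst w) x ltac:(lra) ltac:(lra)) as FL. fold K in FL.
  assert (K * Rabs (fst w - x) <= K * Cmod (w - v)) by (apply Rmult_le_compat_l; unfold x, Rminus; lra).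
  assert (Cmod (w - v) * (2 + K) < m).
  { apply Rlt_le_trans with (m / (2 + K) * (2 + K)); [apply Rmult_lt_compat_r; lra | right; field; lra]. }
  apply Rabs_le_between in FL. apply Rabs_le_between in A2.
  pose proof (Cmod_ge_0 (w - v)). nra.
Qed.

Lemma chart_maps_to p : U p /\ B p -> W (F p) /\ half_plane (F p).
Proof.
  intros [[H1 H2] H3]. unfold W, F, half_plane; simpl.
  replace (frame_y z0 u p - graph_height (frame_x z0 u p) + graph_height (frame_x z0 u p))
    with (frame_y z0 u p) by ring.
  apply Rabs_lt_between in H2. split; [split; [auto | lra]|].
  assert (graph_height (frame_x z0 u p) <= frame_y z0 u p); [|lra].
  apply graph_height_char; [lra | lra |]. unfold P. rewrite frame_pt_xy; auto.
Qed.

Lemma chart_inv_maps_to v : W v /\ half_plane v -> U (G v) /\ B (G v).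
Proof.
  intros [[H1 H2] H3]. unfold half_plane in H3. unfold U, G, P.
  rewrite frame_x_pt, frame_y_pt by auto.
  split; [split; [auto | apply Rabs_lt_between; lra]|].
  apply graph_height_char; lra.
Qed.

Lemma chart_inv_left p : G (F p) = p.
Proof.
  unfold G, F, P; simpl.
  replace (frame_y z0 u p - graph_height (frame_x z0 u p) + graph_height (frame_x z0 u p))
    with (frame_y z0 u p) by ring.
  apply frame_pt_xy; auto.
Qed.

Lemma chart_inv_right v : F (G v) = v.
Proof. unfold F, G, P. rewrite frame_x_pt, frame_y_pt by auto. Cring. Qed.

Lemma chart_lipschitz p w : U p -> U w -> Cmod (F w - F p) <= (2 + K) * Cmod (w - p).
Proof.
  intros [Hp _] [Hw _].
  eapply Rle_trans; [apply Cmod_le_Rabs_sum|]. unfold F; simpl.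
  pose proof (frame_x_lipschitz z0 u Hu w p). pose proof (frame_y_lipschitz z0 u Hu w p).
  pose proof (graph_height_lipschitz (frame_x z0 u w) (frame_x z0 u p) ltac:(lra) ltac:(lra)) as FL.
  fold K in FL. pose proof graph_slope_pos.
  assert (K * Rabs (frame_x z0 u w - frame_x z0 u p) <= K * Cmod (w - p)) by (apply Rmult_le_compat_l; lra).
  pose proof (Rabs_triang (frame_y z0 u w - frame_y z0 u p)
                (- (graph_height (frame_x z0 u w) - graph_height (frame_x z0 u p)))).
  rewrite Rabs_Ropp in H3. unfold Rminus in *.
  replace (frame_y z0 u w + - graph_height (frame_x z0 u w) + - (frame_y z0 u p + - graph_height (frame_x z0 u p)))
    with (frame_y z0 u w + - frame_y z0 u p + - (graph_height (frame_x z0 u w) + - graph_height (frame_x z0 u p)))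
    by ring.
  lra.
Qed.

Lemma chart_inv_lipschitz v w : W v -> W w -> Cmod (G w - G v) <= (2 + K) * Cmod (w - v).
Proof.
  intros [Hv _] [Hw _]. unfold G.
  eapply Rle_trans; [apply frame_pt_dist; auto|].
  pose proof (Rabs_fst_le_Cmod (w - v)%C) as A1. pose proof (Rabs_snd_le_Cmod (w - v)%C) as A2. simpl in A1, A2.
  pose proof (graph_height_lipschitz (fst w) (fst v) ltac:(lra) ltac:(lra)) as FL. fold K in FL.
  pose proof graph_slope_pos.
  assert (K * Rabs (fst w - fst v) <= K * Cmod (w - v)) by (apply Rmult_le_compat_l; unfold Rminus; lra).
  pose proof (Rabs_triang (snd w - snd v) (graph_height (fst w) - graph_height (fst v))).
  replace (snd w + graph_height (fst w) - (snd v + graph_height (fst v)))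
    with (snd w - snd v + (graph_height (fst w) - graph_height (fst v))) by ring.
  unfold Rminus in *. lra.
Qed.

Lemma boundary_chart : has_chart_at B z0.
Proof.
  pose proof graph_slope_pos.
  exists U, W, F, G.
  split; [exact chart_dom_open|]. split; [exact chart_dom_center|]. split; [exact chart_range_open|].
  split; [exact chart_maps_to|]. split; [exact chart_inv_maps_to|].
  split; [intros; apply chart_inv_left|]. split; [intros; apply chart_inv_right|].
  split; apply (lipschitz_continuous_on _ _ (2 + K)); try lra.
  - intros p w [Hp _] [Hw _]. apply chart_lipschitz; auto.
  - intros v w [Hv _] [Hw _]. apply chart_inv_lipschitz; auto.
Qed.

End BoundaryGraph.

Lemma ball_open z rho : is_open (fun w => Cmod (w - z) < rho).
Proof.
  intros w0 H. exists (rho - Cmod (w0 - z)). split; [lra|].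
  intros w Hw. pose proof (Cmod_sub_triangle w w0 z). lra.
Qed.

(* The ball of radius e around (0, e) lies in the half-plane. *)
Lemma interior_chart (B : C -> Prop) x e : 0 < e -> (forall w, Cmod (w - x) < e -> B w) ->
  has_chart_at B x.
Proof.
  intros He Hint. set (o := (0, e) : C).
  exists (fun w => Cmod (w - x) < e), (fun p => Cmod (p - o) < e),
    (fun w => (w - x + o)%C), (fun p => (p - o + x)%C).
  split; [apply ball_open|]. split; [rewrite Cmod_sub_diag; lra|]. split; [apply ball_open|].
  split; [|split; [|split; [|split; [|split]]]].
  - intros w [H1 _]. replace (w - x + o - o)%C with (w - x)%C by Cring.
    split; auto. unfold half_plane. pose proof (Rabs_snd_le_Cmod (w - x)%C).
    apply Rabs_le_between in H. unfold o; simpl in *. lra.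
  - intros p [H1 _]. replace (p - o + x - x)%C with (p - o)%C by Cring.
    split; auto. apply Hint. replace (p - o + x - x)%C with (p - o)%C by Cring. auto.
  - intros w _. Cring.
  - intros p _. Cring.
  - apply (lipschitz_continuous_on _ _ 1); [lra|]. intros w y _ _.
    replace (y - x + o - (w - x + o))%C with (y - w)%C by Cring. lra.
  - apply (lipschitz_continuous_on _ _ 1); [lra|]. intros w y _ _.
    replace (y - o + x - (w - o + x))%C with (y - w)%C by Cring. lra.
Qed.

Lemma boundary_point_chart (B : C -> Prop) x : is_closed B -> semi_smooth B -> B x -> boundary B x ->
  has_chart_at B x.
Proof.
  intros HBc [_ [Hcone Hlim]] Bx Hbx. destruct (Hcone x Hbx) as [Hex Hconv].
  assert (Hlim_x : forall s l, (forall k, is_normal B x (s k)) -> seq_conv s l -> l <> 0%C ->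
                     is_normal B x l).
  { intros s l Hs Hl Hl0. apply (Hlim (fun _ => x) s x l); auto. apply seq_conv_const. }
  destruct (normal_cone_in_open_half_plane B x Hconv Hlim_x Hex) as [u [Hu Hun]].
  destruct (normals_uniformly_transverse B x u Hlim Hun) as [c [r [Hc [Hr Htr]]]].
  destruct (nearest_selector_exists B HBc (ex_intro _ x Bx)) as [q Hq].
  exact (boundary_chart B q x u c r HBc Hu Hc Hr Hq Bx Htr).
Qed.

Theorem theorem9p1 (B : C -> Prop) :
  is_closed B -> semi_smooth B -> manifold_with_boundary_2 B.
Proof.
  intros HBc Hss x Bx.
  destruct (classic (Defs.interior B x)) as [[e [He Hint]]|Hnint].
  - exact (interior_chart B x e He Hint).
  - apply boundary_point_chart; auto. split; auto.
    intros e He. exists x. rewrite Cmod_sub_diag. auto.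
Qed.
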